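(* Let $n\ge 1$ and let $L=(l_{ij})$ be a real symmetric $n\times n$ matrix satisfying $l_{ii}=-\sum_{j\neq i} l_{ij}$ for $i=1,\dots,n$. Let $G$ be the weighted undirected graph with vertex set $\{1,\dots,n\}$ having an edge $\{i,j\}$ of weight $l_{ij}$ whenever $i\neq j$ and $l_{ij}\neq 0$ (and no other edges); $G$ may be disconnected. Let $G_+$ (resp. $G_-$) be the subgraph of $G$ with the same vertex set $\{1,\dots,n\}$ and only the edges of positive (resp. negative) weight. For a graph $H$ let $c(H)$ denote its number of connected components, and let $n_+(L)$, $n_-(L)$, $n_0(L)$ denote the numbers of positive, negative and zero eigenvalues of $L$, counted with multiplicity. Then \[ c(G_+)-c(G)\le n_+(L)\le n-c(G_-),\qquad c(G_-)-c(G)\le n_-(L)\le n-c(G_+), \] \[ c(G)\le n_0(L)\le n+2c(G)-c(G_+)-c(G_-). \]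
   Context: The matrix $L$ is what the paper calls a (weighted) Laplacian matrix of the graph $G$: the edge weights are the off-diagonal entries of $L$ and the diagonal entries are minus the row sums of the off-diagonal entries. Isolated vertices count as connected components. *)

From HB Require Import structures.
From mathcomp Require Import all_boot all_order all_algebra.
From mathcomp Require Import polyrcf.
From mathcomp Require Import reals.
Set Implicit Arguments. Unset Strict Implicit. Unset Printing Implicit Defensive.
Import Order.TTheory GRing.Theory Num.Theory.
Local Open Scope ring_scope.

Definition is_laplacian (R : realType) (n : nat) (L : 'M[R]_n) : Prop :=
  L^T = L /\ forall i : 'I_n, L i i = - \sum_(j < n | j != i) L i j.

Definition edgeG (R : realType) (n : nat) (L : 'M[R]_n) : rel 'I_n :=
  fun i j => (i != j) && (L i j != 0).
Definition edgeGpos (R : realType) (n : nat) (L : 'M[R]_n) : rel 'I_n :=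
  fun i j => (i != j) && (0 < L i j).
Definition edgeGneg (R : realType) (n : nat) (L : 'M[R]_n) : rel 'I_n :=
  fun i j => (i != j) && (L i j < 0).

(* number of connected components of the graph on 'I_n with edge relation e
   (isolated vertices count as components) *)
Definition ncomp (n : nat) (e : rel 'I_n) : nat := n_comp e 'I_n.

Definition n_pos (R : realType) (n : nat) (L : 'M[R]_n) : nat :=
  \sum_(x <- rootsR (char_poly L) | 0 < x) mup x (char_poly L).
Definition n_neg (R : realType) (n : nat) (L : 'M[R]_n) : nat :=
  \sum_(x <- rootsR (char_poly L) | x < 0) mup x (char_poly L).
Definition n_zero (R : realType) (n : nat) (L : 'M[R]_n) : nat :=
  mup 0 (char_poly L).

(* Let Q(x) = x L x^* on complex row vectors. Because the rows of L sum to
   zero, 2 Q(x) = - sum_(i,j) l_ij |x_i - x_j|^2. Hence Q >= 0 on the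
   c(G_+)-dimensional space of vectors constant on the components of G_+,
   Q <= 0 on the analogous space for G_-, and a vector of the former space with
   Q(x) = 0 is constant on the components of G. In an orthonormal eigenbasis of
   L, Q is positive definite on the span of the eigenvectors with positive
   eigenvalues and negative semidefinite on the span of the others. Comparing
   dimensions of intersections gives n_+ + c(G_-) <= n and
   c(G_+) + (n - n_+) <= n + c(G); vectors constant on the components of G lie
   in the kernel, so c(G) <= n_0. The bounds on n_- follow by replacing L with
   -L, and the upper bound on n_0 from n_+ + n_- + n_0 = n. *)

From HB Require Import structures.
From mathcomp Require Import all_boot all_order all_algebra.
From mathcomp Require Import polyrcf reals complex spectral sesquilinear.
From mathcomp Require Import ring zify.
Import Order.TTheory GRing.Theory Num.Theory.
Set Implicit Arguments. Unset Strict Implicit. Unset Printing Implicit Defensive.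
Local Open Scope ring_scope.

Local Notation "x %:C" := (real_complex _ x) (format "x %:C").

Lemma mxrankD_leq_cap (F : fieldType) m1 m2 m3 n (U : 'M[F]_(m1, n))
    (V : 'M_(m2, n)) (W : 'M_(m3, n)) :
  (U :&: V <= W)%MS -> (\rank U + \rank V <= n + \rank W)%N.
Proof.
move=> /mxrankS capUV; rewrite -mxrank_sum_cap.
exact: leq_add (rank_leq_col _) capUV.
Qed.

Section Eigenbasis.
Variables (C : numClosedFieldType) (n : nat) (P : 'M[C]_n).
Hypothesis P_unitary : P \is unitarymx.

Definition eigenspan (S : {pred 'I_n}) : 'M[C]_(#|S|, n) :=
  rowsub enum_val P.

Lemma mxrank_eigenspan S : \rank (eigenspan S) = #|S|.
Proof.
apply/mxrank_unitary/row_unitarymxP => k l.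
by rewrite !row_rowsub (row_unitarymxP P_unitary) (inj_eq enum_val_inj).
Qed.

Lemma mxrank_eigenspanC (S : {pred 'I_n}) :
  \rank (eigenspan [predC S]) = (n - #|S|)%N.
Proof.
have /(congr1 (subn^~ #|S|)) := cardC S; rewrite card_ord addKn => <-.
exact: mxrank_eigenspan.
Qed.

Lemma sub_eigenspanP S (x : 'rV[C]_n) : (x <= eigenspan S)%MS ->
  exists2 z : 'rV_n, x = z *m P & forall i, i \notin S -> z 0 i = 0.
Proof.
move=> /submxP[w ->]; exists (w *m rowsub enum_val 1%:M).
  by rewrite -mulmxA mul_rowsub_mx mul1mx.
move=> i iNS; rewrite mxE big1 // => k _; rewrite !mxE.
case: eqP => [kE|]; last by rewrite mulr0.
by move: iNS; rewrite -kE enum_valP.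
Qed.

Variable d : 'rV[C]_n.
Let A := invmx P *m diag_mx d *m P.

Lemma diag_form_unitary (z : 'rV[C]_n) :
  ((z *m P) *m A *m (z *m P)^t*)%sesqui 0 0 = \sum_i d 0 i * `|z 0 i| ^+ 2.
Proof.
have /unitarymxP PPt := P_unitary.
rewrite /A invmx_unitary // trmx_mul map_mxM !mulmxA -(mulmxA z) PPt mulmx1.
rewrite -(mulmxA _ P) PPt mulmx1 mxE; apply: eq_bigr => i _.
by rewrite mul_mx_diag !mxE normCK mulrCA mulrA.
Qed.

Lemma ker_diag_unitary (z : 'rV[C]_n) :
  (z *m P) *m A = 0 -> forall i, z 0 i * d 0 i = 0.
Proof.
rewrite /A !mulmxA mulmxK ?unitarymx_unit //.
move=> /(congr1 (mulmx^~ (invmx P))); rewrite mulmxK ?unitarymx_unit //.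
by rewrite mul0mx mul_mx_diag => /rowP z0 i; move: (z0 i); rewrite !mxE.
Qed.

End Eigenbasis.

Lemma sum_count_mem (T : eqType) (u s : seq T) (a : pred T) :
  uniq u -> {subset s <= u} -> (\sum_(x <- u | a x) count_mem x s)%N = count a s.
Proof.
move=> u_uniq; elim: s => [|y s IHs] s_sub /=; first by rewrite big1.
rewrite big_split /= IHs => [|x xs]; last by apply: s_sub; rewrite inE xs orbT.
congr (_ + _)%N; rewrite big_mkcond (bigD1_seq y) ?s_sub ?mem_head //= eqxx.
rewrite big1 ?addn0 => [|x /negbTE]; first by case: (a y).
by rewrite eq_sym => ->; case: (a x).
Qed.

Lemma sum_mup_rootsR (R : rcfType) (s : seq R) (a : pred R) :
  let p := \prod_(x <- s) ('X - x%:P) in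
  (\sum_(x <- rootsR p | a x) mup x p)%N = count a s.
Proof.
move=> p; have p_neq0 : p != 0 by rewrite monic_neq0 // monic_prod_XsubC.
under eq_bigr do rewrite mu_prod_XsubC.
apply: sum_count_mem; first exact: uniq_roots.
by move=> x xs; rewrite -(roots_on_rootsR p_neq0) in_itv /= root_prod_XsubC.
Qed.

Lemma char_poly_similar (R : comUnitRingType) n (P A : 'M[R]_n) :
  P \in unitmx -> char_poly (invmx P *m A *m P) = char_poly A.
Proof.
move=> P_unit; rewrite /char_poly.
set P' := map_mx polyC P; set Pinv' := map_mx polyC (invmx P).
have Pinv'P : Pinv' *m P' = 1%:M by rewrite -map_mxM mulVmx // map_mx1.
have -> : char_poly_mx (invmx P *m A *m P) = Pinv' *m char_poly_mx A *m P'.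
  rewrite /char_poly_mx !map_mxM mulmxBr mulmxBl scalar_mxC.
  by rewrite -(mulmxA _ Pinv') Pinv'P mulmx1.
rewrite !det_mulmx mulrC mulrA -det_mulmx.
by rewrite -map_mxM mulmxV // map_mx1 det1 mul1r.
Qed.

Lemma card_sign_partition (R : realDomainType) (I : finType) (r : I -> R) :
  (#|[pred i | (0 < r i)%R]| + #|[pred i | (r i < 0)%R]|
    + #|[pred i | r i == 0%R]|)%N = #|I|.
Proof.
rewrite -(cardC [pred i | r i == 0]) addnC; congr (_ + _)%N.
rewrite -[RHS](cardID [pred i | 0 < r i]); congr (_ + _)%N;
  by apply: eq_card => i; rewrite !inE; case: ltrgt0P.
Qed.

Lemma ncomp_roots n (e : rel 'I_n) : ncomp e = #|fingraph.roots e|.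
Proof. by apply: eq_card => x; rewrite !inE andbT. Qed.

Lemma eq_ncomp n (e e' : rel 'I_n) : e =2 e' -> ncomp e = ncomp e'.
Proof. by move=> ee'; rewrite !ncomp_roots; apply/eq_card/eq_roots. Qed.

Section ComponentSpace.
Variables (F : fieldType) (n : nat) (e : rel 'I_n).

Definition component_mx : 'M[F]_(#|fingraph.roots e|, n) :=
  \matrix_(k, j) (fingraph.root e j == enum_val k)%:R.

Lemma mxrank_component_mx : \rank component_mx = ncomp e.
Proof.
rewrite ncomp_roots; apply/eqP/inj_row_free => w /rowP w0; apply/rowP => k.
have /eqP root_k : fingraph.root e (enum_val k) == enum_val k := enum_valP k.
move: (w0 (enum_val k)); rewrite !mxE (bigD1 k) //= big1 => [|l lk].
  by rewrite !mxE root_k eqxx mulr1 addr0.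
by rewrite !mxE root_k (inj_eq enum_val_inj) eq_sym (negbTE lk) mulr0.
Qed.

Hypothesis e_sym : connect_sym e.

Lemma component_mxP (x : 'rV[F]_n) :
  reflect (forall i j, e i j -> x 0 i = x 0 j) (x <= component_mx)%MS.
Proof.
apply: (iffP submxP) => [[w ->] i j eij|x_const].
  rewrite !mxE; apply: eq_bigr => k _.
  by rewrite !mxE (fingraph.rootP e_sym (connect1 eij)).
exists (\row_k x 0 (enum_val k)); apply/rowP => j; rewrite !mxE.
have [k0 k0E] : exists k0 : 'I_#|fingraph.roots e|,
    enum_val k0 = fingraph.root e j.
  have root_j := fingraph.roots_root e_sym j.
  by exists (enum_rank_in root_j (fingraph.root e j)); rewrite enum_rankK_in.
rewrite (bigD1 k0) //= big1 => [|k k_ne]; last first.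
  by rewrite !mxE -k0E (inj_eq enum_val_inj) eq_sym (negbTE k_ne) mulr0.
rewrite !mxE k0E eqxx mulr1 addr0.
have x_closed : fingraph.closed e [pred k | x 0 k == x 0 j].
  by move=> k l /x_const; rewrite !inE => ->.
have := fingraph.closed_connect x_closed (fingraph.connect_root e j).
by rewrite !inE eqxx => /esym/eqP ->.
Qed.

End ComponentSpace.

Section LaplacianBasics.
Variables (R : realType) (n : nat) (L : 'M[R]_n).
Hypothesis L_lap : is_laplacian L.

Lemma laplacian_sym i j : L j i = L i j.
Proof. by rewrite -[in RHS]L_lap.1 mxE. Qed.

Lemma laplacian_row_sum i : \sum_j L i j = 0.
Proof. by rewrite (bigD1 i) //= L_lap.2 addNr. Qed.

Lemma laplacianN : is_laplacian (- L).
Proof.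
split=> [|i]; first by rewrite linearN /= L_lap.1.
under eq_bigr do rewrite mxE.
by rewrite mxE L_lap.2 sumrN !opprK.
Qed.

Lemma laplacian_connect_sym :
  [/\ connect_sym (edgeG L), connect_sym (edgeGpos L) & connect_sym (edgeGneg L)].
Proof.
by split; apply: sym_connect_sym => i j;
  rewrite /edgeG /edgeGpos /edgeGneg eq_sym laplacian_sym.
Qed.

End LaplacianBasics.

Lemma edgeGN (R : realType) n (L : 'M[R]_n) : edgeG (- L) =2 edgeG L.
Proof. by move=> i j; rewrite /edgeG mxE oppr_eq0. Qed.

Lemma edgeGposN (R : realType) n (L : 'M[R]_n) : edgeGpos (- L) =2 edgeGneg L.
Proof. by move=> i j; rewrite /edgeGpos /edgeGneg mxE oppr_gt0. Qed.

Lemma edgeGnegN (R : realType) n (L : 'M[R]_n) : edgeGneg (- L) =2 edgeGpos L.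
Proof. by move=> i j; rewrite /edgeGpos /edgeGneg mxE oppr_lt0. Qed.

Definition quad_form (R : realType) n (L : 'M[R]_n) (x : 'rV[R[i]]_n) : R[i] :=
  (x *m map_mx (real_complex R) L *m x^t*)%sesqui 0 0.

Lemma quad_formN (R : realType) n (L : 'M[R]_n) x :
  quad_form (- L) x = - quad_form L x.
Proof. by rewrite /quad_form map_mxN mulmxN mulNmx mxE. Qed.

Section QuadForm.
Variables (R : realType) (n : nat) (L : 'M[R]_n).
Hypothesis L_lap : is_laplacian L.
Implicit Type x : 'rV[R[i]]_n.

Lemma quad_formE x :
  quad_form L x = \sum_i \sum_j x 0 i * (L i j)%:C * (x 0 j)^*.
Proof.
rewrite /quad_form mxE exchange_big; apply: eq_bigr => j _.
rewrite !mxE big_distrl.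
by apply: eq_bigr => i _; rewrite !mxE.
Qed.

(* The diagonal terms cancel because the rows and, by symmetry, the columns of
   [L] sum to zero. *)
Lemma quad_form_laplacian x :
  quad_form L x *+ 2 = \sum_i \sum_j - (L i j)%:C * `|x 0 i - x 0 j| ^+ 2.
Proof.
have expand (l a b : R[i]) : - l * `|a - b| ^+ 2 =
    (a * l * b^* + b * l * a^*) - (l * (a * a^*) + l * (b * b^*)).
  by rewrite normCK rmorphB /=; ring.
under eq_bigr do under eq_bigr do rewrite expand.
under eq_bigr do rewrite sumrB big_split [X in _ - X]big_split /=.
rewrite sumrB !big_split /=.
have diag_l : \sum_i \sum_j (L i j)%:C * (x 0 i * (x 0 i)^*) = 0.
  apply: big1 => i _.
  by rewrite -mulr_suml -rmorph_sum laplacian_row_sum // rmorph0 mul0r.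
have diag_r : \sum_i \sum_j (L i j)%:C * (x 0 j * (x 0 j)^*) = 0.
  rewrite exchange_big; apply: big1 => j _.
  under eq_bigr do rewrite -laplacian_sym //.
  by rewrite -mulr_suml -rmorph_sum laplacian_row_sum // rmorph0 mul0r.
have swap : \sum_i \sum_j x 0 j * (L i j)%:C * (x 0 i)^* = quad_form L x.
  rewrite quad_formE exchange_big; apply: eq_bigr => j _; apply: eq_bigr => i _.
  by rewrite laplacian_sym.
by rewrite diag_l diag_r swap -quad_formE addr0 subr0 mulr2n.
Qed.

Lemma laplacian_kernel x : (forall i j, edgeG L i j -> x 0 i = x 0 j) ->
  x *m map_mx (real_complex R) L = 0.
Proof.
move=> x_const; apply/rowP => j; rewrite !mxE.
transitivity (\sum_i x 0 j * (L i j)%:C).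
  apply: eq_bigr => i _; rewrite mxE.
  have [-> // | Lij0] := eqVneq (L i j) 0; first by rewrite rmorph0 !mulr0.
  have [-> // | ij] := eqVneq i j.
  by rewrite (x_const i j) // /edgeG ij Lij0.
under eq_bigr do rewrite -laplacian_sym //.
by rewrite -mulr_sumr -rmorph_sum laplacian_row_sum // rmorph0 mulr0.
Qed.

Variable x : 'rV[R[i]]_n.
Hypothesis x_pos : forall i j, edgeGpos L i j -> x 0 i = x 0 j.

Let quad_form_term_ge0 i j : 0 <= - (L i j)%:C * `|x 0 i - x 0 j| ^+ 2.
Proof.
case: (ltrgt0P (L i j)) => [Lij | Lij | ->]; last by rewrite rmorph0 oppr0 mul0r.
  have [-> | ij] := eqVneq i j; first by rewrite subrr normr0 expr0n mulr0.
  by rewrite (x_pos (i := i) (j := j)) ?subrr ?normr0 ?expr0n ?mulr0 //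
    /edgeGpos ij.
by rewrite mulr_ge0 ?exprn_ge0 // oppr_ge0 -(rmorph0 (real_complex R)) lecR ltW.
Qed.

Lemma quad_form_ge0 : 0 <= quad_form L x.
Proof.
rewrite -(pmulrn_lge0 _ (ltn0Sn 1)) quad_form_laplacian.
by do 2 apply: sumr_ge0 => ? _.
Qed.

Lemma quad_form_eq0 :
  quad_form L x = 0 -> forall i j, edgeG L i j -> x 0 i = x 0 j.
Proof.
move=> qx0 i j /andP[_ Lij].
have row_ge0 k : 0 <= \sum_l - (L k l)%:C * `|x 0 k - x 0 l| ^+ 2.
  by apply: sumr_ge0.
have sum0 : \sum_k \sum_l - (L k l)%:C * `|x 0 k - x 0 l| ^+ 2 = 0.
  by rewrite -quad_form_laplacian qx0 mul0rn.
move: sum0 => /(psumr_eq0P (fun k _ => row_ge0 k)) /(_ i isT).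
move=> /(psumr_eq0P (fun l _ => quad_form_term_ge0 i l)) /(_ j isT) /eqP.
rewrite mulf_eq0 oppr_eq0 fmorph_eq0 (negbTE Lij) sqrf_eq0 normr_eq0 subr_eq0.
by move/eqP.
Qed.

End QuadForm.

Lemma quad_form_le0 (R : realType) n (L : 'M[R]_n) (x : 'rV[R[i]]_n) :
  is_laplacian L -> (forall i j, edgeGneg L i j -> x 0 i = x 0 j) ->
  quad_form L x <= 0.
Proof.
move=> L_lap x_neg; rewrite -oppr_ge0 -quad_formN.
apply: (quad_form_ge0 (laplacianN L_lap)) => i j; rewrite edgeGposN; exact: x_neg.
Qed.

(* The spectral theorem of [spectral] is stated over a numClosedFieldType, so
   [L] is diagonalised over [R[i]]; its eigenvalues [r] are real. *)
Definition diagonalizes (R : realType) n (P : 'M[R[i]]_n) (r : 'I_n -> R)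
    (L : 'M[R]_n) : Prop :=
  map_mx (real_complex R) L = invmx P *m diag_mx (\row_i (r i)%:C) *m P.

Lemma diagonalizesN (R : realType) n (P : 'M[R[i]]_n) r (L : 'M[R]_n) :
  diagonalizes P r L -> diagonalizes P (fun i => - r i) (- L).
Proof.
move=> PrL; rewrite /diagonalizes map_mxN PrL -mulNmx -mulmxN.
congr (_ *m _ *m _).
by apply/matrixP => i j; rewrite !mxE rmorphN mulNrn.
Qed.

Lemma symmetric_diagonalizable (R : realType) n (L : 'M[R]_n) : L^T = L ->
  exists2 P, P \is unitarymx & exists r, diagonalizes P r L.
Proof.
move=> L_sym; set A := map_mx (real_complex R) L.
have A_herm : A \is hermsymmx.
  apply: realsym_hermsym.
    apply/is_hermitianmxP/matrixP => i j.
    by rewrite !mxE /= expr0 mul1r -{1}L_sym mxE.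
  by apply/mxOverP => i j; rewrite mxE; apply/complex_realP; exists (L i j).
exists (spectralmx A); first exact: spectral_unitarymx.
exists (fun i => complex.Re (spectral_diag A 0 i)).
rewrite /diagonalizes -/A {1}(orthomx_spectralP (hermitian_normalmx A_herm)).
congr (_ *m diag_mx _ *m _); apply/rowP => i; rewrite mxE RRe_real //.
exact: mxOverP (hermitian_spectral_diag_real A_herm) 0 i.
Qed.

Section Inertia.
Variables (R : realType) (n : nat) (L : 'M[R]_n) (P : 'M[R[i]]_n) (r : 'I_n -> R).
Hypotheses (P_unitary : P \is unitarymx) (PrL : diagonalizes P r L).

Lemma char_poly_diagonalized :
  char_poly L = \prod_(x <- [seq r i | i <- index_enum 'I_n]) ('X - x%:P).
Proof.
apply: (@map_poly_inj _ _ (real_complex R)).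
rewrite map_char_poly PrL char_poly_similar ?unitarymx_unit //.
rewrite char_poly_trig ?diag_mx_is_trig // rmorph_prod big_map /=.
by apply: eq_bigr => i _; rewrite rmorphB /= map_polyX map_polyC !mxE eqxx mulr1n.
Qed.

Lemma inertia_diagonalized :
  [/\ n_pos L = #|[pred i | 0 < r i]|, n_neg L = #|[pred i | r i < 0]|
    & n_zero L = #|[pred i | r i == 0]|].
Proof.
have count_r (a : pred R) :
    count a [seq r i | i <- index_enum 'I_n] = #|[pred i | a (r i)]|.
  by rewrite count_map -sum1_count sum1_card.
by rewrite /n_pos /n_neg /n_zero char_poly_diagonalized !sum_mup_rootsR
  mu_prod_XsubC !count_r.
Qed.

End Inertia.

Section InertiaCounts.
Variables (R : realType) (n : nat) (L : 'M[R]_n).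
Hypothesis L_sym : L^T = L.

Lemma n_posN : n_pos (- L) = n_neg L.
Proof.
have [P P_unitary [r PrL]] := symmetric_diagonalizable L_sym.
have [-> _ _] := inertia_diagonalized P_unitary (diagonalizesN PrL).
have [_ -> _] := inertia_diagonalized P_unitary PrL.
by apply: eq_card => i; rewrite !inE oppr_gt0.
Qed.

Lemma n_pos_neg_zero : (n_pos L + n_neg L + n_zero L)%N = n.
Proof.
have [P P_unitary [r PrL]] := symmetric_diagonalizable L_sym.
have [-> -> ->] := inertia_diagonalized P_unitary PrL.
by rewrite card_sign_partition card_ord.
Qed.

End InertiaCounts.

Lemma quad_form_diagonalized (R : realType) n (L : 'M[R]_n) P r
    (z : 'rV[R[i]]_n) :
  P \is unitarymx -> diagonalizes P r L ->
  quad_form L (z *m P) = \sum_i (r i)%:C * `|z 0 i| ^+ 2.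
Proof.
move=> P_unitary PrL; rewrite /quad_form PrL diag_form_unitary //.
by under eq_bigr do rewrite mxE.
Qed.

Section InertiaBounds.
Variables (R : realType) (n : nat) (L : 'M[R]_n).
Hypothesis L_lap : is_laplacian L.

Lemma ncomp_edgeGpos_le : (ncomp (edgeGpos L) <= n_pos L + ncomp (edgeG L))%N.
Proof.
have [G_sym Gpos_sym _] := laplacian_connect_sym L_lap.
have [P P_unitary [r PrL]] := symmetric_diagonalizable L_lap.1.
have [n_posE _ _] := inertia_diagonalized P_unitary PrL.
set nonpos := [predC [pred i | 0 < r i]].
suff cap_sub : (component_mx R[i] (edgeGpos L) :&: eigenspan P nonpos
    <= component_mx R[i] (edgeG L))%MS.
  have := mxrankD_leq_cap cap_sub.
  by rewrite !mxrank_component_mx mxrank_eigenspanC // -n_posE; lia.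
apply/rV_subP => x; rewrite sub_capmx.
move=> /andP[/(component_mxP Gpos_sym) x_pos].
move=> /sub_eigenspanP[z xE z_supp]; apply/(component_mxP G_sym).
apply: (quad_form_eq0 L_lap x_pos).
apply/eqP; rewrite eq_le quad_form_ge0 // andbT.
rewrite xE (quad_form_diagonalized _ P_unitary PrL); apply: sumr_le0 => i _.
have [|/z_supp ->] := boolP (i \in nonpos); last by rewrite normr0 expr0n mulr0.
rewrite !inE -leNgt => ri_le0; apply: mulr_le0_ge0; last exact: exprn_ge0.
by rewrite -(rmorph0 (real_complex R)) lecR.
Qed.

Lemma n_pos_edgeGneg_le : (n_pos L + ncomp (edgeGneg L) <= n)%N.
Proof.
have [_ _ Gneg_sym] := laplacian_connect_sym L_lap.
have [P P_unitary [r PrL]] := symmetric_diagonalizable L_lap.1.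
have [n_posE _ _] := inertia_diagonalized P_unitary PrL.
set pos := [pred i | 0 < r i].
suff cap0 :
    (eigenspan P pos :&: component_mx R[i] (edgeGneg L) <= (0 : 'M_n))%MS.
  have := mxrankD_leq_cap cap0.
  by rewrite mxrank_eigenspan // mxrank_component_mx mxrank0 addn0 n_posE.
apply/rV_subP => x; rewrite sub_capmx => /andP[/sub_eigenspanP[z xE z_supp]].
move=> /(component_mxP Gneg_sym) x_neg.
have term_ge0 i : 0 <= (r i)%:C * `|z 0 i| ^+ 2.
  have [ri_pos|/z_supp ->] := boolP (i \in pos); last first.
    by rewrite normr0 expr0n mulr0.
  by rewrite mulr_ge0 ?exprn_ge0 // ler0c ltW.
have form0 : \sum_i (r i)%:C * `|z 0 i| ^+ 2 = 0.
  apply/eqP; rewrite eq_le sumr_ge0 // andbT.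
  by rewrite -(quad_form_diagonalized _ P_unitary PrL) -xE quad_form_le0.
rewrite submx0 xE; apply/eqP; suff -> : z = 0 by rewrite mul0mx.
apply/rowP => i; rewrite mxE; have [ri_pos|/z_supp //] := boolP (i \in pos).
move: form0 => /(psumr_eq0P (fun i _ => term_ge0 i)) /(_ i isT) /eqP.
by rewrite mulf_eq0 fmorph_eq0 gt_eqF // sqrf_eq0 normr_eq0 => /eqP.
Qed.

Lemma ncomp_edgeG_le : (ncomp (edgeG L) <= n_zero L)%N.
Proof.
have [G_sym _ _] := laplacian_connect_sym L_lap.
have [P P_unitary [r PrL]] := symmetric_diagonalizable L_lap.1.
have [_ _ n_zeroE] := inertia_diagonalized P_unitary PrL.
set nonzero := [predC [pred i | r i == 0]].
suff cap0 :
    (component_mx R[i] (edgeG L) :&: eigenspan P nonzero <= (0 : 'M_n))%MS.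
  have := mxrankD_leq_cap cap0.
  by rewrite mxrank_component_mx mxrank_eigenspanC // mxrank0 -n_zeroE; lia.
apply/rV_subP => x; rewrite sub_capmx.
move=> /andP[/(component_mxP G_sym) x_const].
move=> /sub_eigenspanP[z xE z_supp].
have := laplacian_kernel L_lap x_const.
rewrite xE PrL => /(ker_diag_unitary P_unitary) zr0.
rewrite submx0; apply/eqP; suff -> : z = 0 by rewrite mul0mx.
apply/rowP => i; rewrite mxE; have [ri_ne0|/z_supp //] := boolP (i \in nonzero).
move/eqP: (zr0 i); rewrite mxE mulf_eq0 fmorph_eq0.
by rewrite !inE in ri_ne0; rewrite (negbTE ri_ne0) orbF => /eqP.
Qed.

End InertiaBounds.

Theorem theorem4p1 (R : realType) (n : nat) (L : 'M[R]_n) :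
  (0 < n)%N -> is_laplacian L ->
  ((ncomp (edgeGpos L) <= n_pos L + ncomp (edgeG L))%N /\
      (n_pos L + ncomp (edgeGneg L) <= n)%N /\
      (ncomp (edgeGneg L) <= n_neg L + ncomp (edgeG L))%N /\
      (n_neg L + ncomp (edgeGpos L) <= n)%N /\
      (ncomp (edgeG L) <= n_zero L)%N /\
      (n_zero L + ncomp (edgeGpos L) + ncomp (edgeGneg L) <= n + 2 * ncomp (edgeG L))%N).
Proof.
move=> _ L_lap; have NL_lap := laplacianN L_lap.
have := ncomp_edgeGpos_le L_lap; have := n_pos_edgeGneg_le L_lap.
have := ncomp_edgeGpos_le NL_lap; have := n_pos_edgeGneg_le NL_lap.
rewrite n_posN ?L_lap.1 // (eq_ncomp (edgeGN L)) (eq_ncomp (edgeGposN L)).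
rewrite (eq_ncomp (edgeGnegN L)).
have := ncomp_edgeG_le L_lap; have := n_pos_neg_zero L_lap.1.
lia.
Qed.
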